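(* Assume $\Omega^*\neq\emptyset$, let $\sigma\in[0,c]$, and let an initial point $\omega_0=(Z_0,E_0,-\lambda_0)$ be given. Then there exist parameters $(W_k,\theta_k,\beta_k)\in\mathcal{S}(\sigma,A)$, $k\ge0$, such that the sequence $\{\omega_k\}$ generated by the iteration below converges to a solution $\omega^*\in\Omega^*$.
   Context: Let $A\in\mathbb{R}^{m\times d}$, $X\in\mathbb{R}^{m\times n}$, and let $f:\mathbb{R}^{d\times n}\to\mathbb{R}$, $g:\mathbb{R}^{m\times n}\to\mathbb{R}$ be convex. Consider the problem $\min_{Z,E} f(Z)+g(E)$ subject to $X=AZ+E$. Triples are written $\omega=(Z,E,-\lambda)$ with $\lambda\in\mathbb{R}^{m\times n}$ a Lagrange multiplier. $\Omega^*$ is the solution set: the set of $\omega^*=(Z^*,E^*,-\lambda^* )$ with $0\in\partial f(Z^* )+A^\top\lambda^*$, $0\in\partial g(E^* )+\lambda^*$, $AZ^*+E^*=X$. $\circ$ is the Hadamard product; $\beta^{-1}$ is the entrywise reciprocal; $\tfrac{\theta}{2}\circ\|M\|_F^2:=\tfrac12\sum_{ij}\theta_{ij}M_{ij}^2$. Iteration (D-LADMM), with parameters $W_k\in\mathbb{R}^{m\times d}$, $\theta_k\in\mathbb{R}^{d\times n}$, $\beta_k\in\mathbb{R}^{m\times n}$: $Z_{k+1}=\arg\min_Z\{ f(Z)+\tfrac{\theta_k}{2}\circ\|Z-Z_k+\theta_k^{-1}\circ W_k^\top(\lambda_k+\beta_k\circ(AZ_k+E_k-X))\|_F^2\}$,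 $E_{k+1}=\arg\min_E\{g(E)+\tfrac{\beta_k}{2}\circ\|E-X+AZ_{k+1}+\beta_k^{-1}\circ\lambda_k\|_F^2\}$, $\lambda_{k+1}=\lambda_k+\beta_k\circ(AZ_{k+1}+E_{k+1}-X)$. $\mathcal{S}(\sigma,A)$ is the set of $(W,\theta,\beta)$ with $\|W-A\|\le\sigma$ (spectral norm), $\theta,\beta$ entrywise positive, and $Z\mapsto\theta\circ Z-W^\top(\beta\circ(AZ))$ positive definite ($\langle\cdot(Z),Z\rangle>0$ for $Z\neq0$). Standing assumption: there is a constant $c$ such that $\mathcal{S}(\sigma,A)\ne\emptyset$ for all $0\le\sigma\le c$. *)

From HB Require Import structures.
From mathcomp Require Import all_boot all_order all_algebra.
From mathcomp Require Import all_classical all_reals all_analysis.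
Set Implicit Arguments. Unset Strict Implicit. Unset Printing Implicit Defensive.
Import Order.TTheory GRing.Theory Num.Theory.
Import numFieldNormedType.Exports.
Local Open Scope ring_scope.

Section DLADMM.
Variable R : realType.

Definition hadm (p q : nat) (M N : 'M[R]_(p, q)) : 'M[R]_(p, q) := map2_mx *%R M N.
Definition einv (p q : nat) (M : 'M[R]_(p, q)) : 'M[R]_(p, q) := map_mx (fun x => x^-1) M.
Definition frob (p q : nat) (M N : 'M[R]_(p, q)) : R := \sum_i \sum_j M i j * N i j.
Definition wsq (p q : nat) (th M : 'M[R]_(p, q)) : R :=
  2^-1 * \sum_i \sum_j th i j * (M i j) ^+ 2.
Definition vnorm2 (p : nat) (x : 'cV[R]_p) : R := Num.sqrt (\sum_i (x i 0) ^+ 2).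
Definition specnorm_le (p q : nat) (M : 'M[R]_(p, q)) (s : R) : Prop :=
  forall x : 'cV[R]_q, vnorm2 (M *m x) <= s * vnorm2 x.
Definition convex_fun (p q : nat) (f : 'M[R]_(p, q) -> R) : Prop :=
  forall (X Y : 'M[R]_(p, q)) (t : R), 0 <= t -> t <= 1 ->
    f (t *: X + (1 - t) *: Y) <= t * f X + (1 - t) * f Y.
Definition subgrad (p q : nat) (f : 'M[R]_(p, q) -> R) (Z G : 'M[R]_(p, q)) : Prop :=
  forall Y, f Z + frob G (Y - Z) <= f Y.

Definition in_S (m d n : nat) (sigma : R) (A : 'M[R]_(m, d))
  (W : 'M[R]_(m, d)) (th : 'M[R]_(d, n)) (be : 'M[R]_(m, n)) : Prop :=
  [/\ specnorm_le (W - A) sigma,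
      (forall i j, 0 < th i j),
      (forall i j, 0 < be i j) &
      (forall Z : 'M[R]_(d, n), Z != 0 ->
         0 < frob (hadm th Z - W^T *m hadm be (A *m Z)) Z)].

(* (Z, E, -lambda) belongs to Omega^* *)
Definition in_Omega (m d n : nat) (f : 'M[R]_(d, n) -> R) (g : 'M[R]_(m, n) -> R)
  (A : 'M[R]_(m, d)) (X : 'M[R]_(m, n))
  (Z : 'M[R]_(d, n)) (E : 'M[R]_(m, n)) (lam : 'M[R]_(m, n)) : Prop :=
  [/\ (exists G, subgrad f Z G /\ G + A^T *m lam = 0),
      (exists H, subgrad g E H /\ H + lam = 0) &
      A *m Z + E = X].

Definition dladmm_step (m d n : nat) (f : 'M[R]_(d, n) -> R) (g : 'M[R]_(m, n) -> R)
  (A : 'M[R]_(m, d)) (X : 'M[R]_(m, n))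
  (W : 'M[R]_(m, d)) (th : 'M[R]_(d, n)) (be : 'M[R]_(m, n))
  (Z : 'M[R]_(d, n)) (E : 'M[R]_(m, n)) (lam : 'M[R]_(m, n))
  (Z' : 'M[R]_(d, n)) (E' : 'M[R]_(m, n)) (lam' : 'M[R]_(m, n)) : Prop :=
  let shiftZ := hadm (einv th) (W^T *m (lam + hadm be (A *m Z + E - X))) in
  let FZ := fun Y => f Y + wsq th (Y - Z + shiftZ) in
  let GE := fun Y => g Y + wsq be (Y - X + A *m Z' + hadm (einv be) lam) in
  [/\ (forall Y, FZ Z' <= FZ Y),
      (forall Y, GE E' <= GE Y) &
      lam' = lam + hadm be (A *m Z' + E' - X)].

End DLADMM.

(* Take W = A, theta = 1 + |A|_F^2 and beta = 1: these parameters lie in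
   S(sigma, A) for every sigma >= 0, and the iteration becomes the linearized
   ADMM. Its optimality conditions are subgradient inclusions, and the
   monotonicity of the subdifferentials of f and g gives, for every solution w*,
   the Fejer inequality
     |w_(k+1) - w*|_H^2 + |w_(k+1) - w_k|_H^2 <= |w_k - w*|_H^2
   for a positive definite H. Hence the iterates are bounded and their
   increments vanish. A cluster point is then a solution, because the graph of
   the subdifferential of a finite convex function is closed (such a function
   is continuous), and Fejer monotonicity with respect to this solution forces
   the whole sequence to converge to it. *)

From HB Require Import structures.
From mathcomp Require Import all_boot all_order all_algebra.
From mathcomp Require Import all_classical all_reals all_analysis.
From mathcomp Require Import ring lra.
Import Order.TTheory GRing.Theory Num.Theory.
Import numFieldNormedType.Exports.
Local Open Scope classical_set_scope.
Local Open Scope ring_scope.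

Set Implicit Arguments.
Unset Strict Implicit.
Unset Printing Implicit Defensive.

Notation "''[' M ]" := (frob M M) (format "''[' M ]") : ring_scope.

Section Frobenius.
Variables (R : realType) (p q : nat).
Implicit Types M N P : 'M[R]_(p, q).

Lemma frobC M N : frob M N = frob N M.
Proof. by apply: eq_bigr => i _; apply: eq_bigr => j _; rewrite mulrC. Qed.

Lemma frobDl M N P : frob (M + N) P = frob M P + frob N P.
Proof.
rewrite /frob -big_split; apply: eq_bigr => i _; rewrite -big_split.
by apply: eq_bigr => j _; rewrite mxE mulrDl.
Qed.

Lemma frobZl a M P : frob (a *: M) P = a * frob M P.
Proof.
rewrite /frob mulr_sumr; apply: eq_bigr => i _; rewrite mulr_sumr.
by apply: eq_bigr => j _; rewrite mxE mulrA.
Qed.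

Lemma frobNl M P : frob (- M) P = - frob M P.
Proof. by rewrite -scaleN1r frobZl mulN1r. Qed.

Lemma frobBl M N P : frob (M - N) P = frob M P - frob N P.
Proof. by rewrite frobDl frobNl. Qed.

Lemma frobDr M N P : frob P (M + N) = frob P M + frob P N.
Proof. by rewrite frobC frobDl ![frob _ P]frobC. Qed.

Lemma frobZr a M P : frob P (a *: M) = a * frob P M.
Proof. by rewrite frobC frobZl frobC. Qed.

Lemma frobNr M P : frob P (- M) = - frob P M.
Proof. by rewrite frobC frobNl frobC. Qed.

Lemma frobBr M N P : frob P (M - N) = frob P M - frob P N.
Proof. by rewrite frobDr frobNr. Qed.

Lemma frob0l P : frob 0 P = 0.
Proof. by rewrite -(scale0r 0) frobZl mul0r. Qed.

Lemma frob_ge0 M : 0 <= '[M].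
Proof. by rewrite !sumr_ge0 // => i _; rewrite sumr_ge0 // => j _; rewrite -expr2 sqr_ge0. Qed.

Lemma frob_eq0 M : '[M] = 0 -> M = 0.
Proof.
have sq_ge0 (i : 'I_p) (j : 'I_q) : 0 <= M i j * M i j by rewrite -expr2 sqr_ge0.
move=> /eqP; rewrite psumr_eq0 => [/allP M0|i _]; last exact: sumr_ge0.
apply/matrixP => i j; rewrite mxE; move/(_ i (mem_index_enum i)): M0.
rewrite psumr_eq0 // => /allP /(_ j (mem_index_enum j)).
by rewrite mulf_eq0 orbb => /eqP.
Qed.

Lemma frob_gt0 M : M != 0 -> 0 < '[M].
Proof. by move=> M0; rewrite lt0r frob_ge0 andbT; apply: contra_neq M0; apply: frob_eq0. Qed.

Lemma sqr_entry_le_frob M i j : M i j ^+ 2 <= '[M].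
Proof.
rewrite /frob (bigD1 i) //= (bigD1 j) //= -expr2 -addrA lerDl.
have sq (a : R) : 0 <= a * a by rewrite -expr2 sqr_ge0.
by rewrite addr_ge0 ?sumr_ge0 // => k _; rewrite ?sumr_ge0.
Qed.

Lemma frobD_sqr M N : '[M + N] = '[M] + 2 * frob M N + '[N].
Proof. by rewrite frobDl !frobDr (frobC N M); ring. Qed.

Lemma frobB_sqr M N : '[M - N] = '[M] - 2 * frob M N + '[N].
Proof. by rewrite frobBl !frobBr (frobC N M); ring. Qed.

Lemma frobZ_sqr a M : '[a *: M] = a ^+ 2 * '[M].
Proof. by rewrite frobZl frobZr mulrA expr2. Qed.

Lemma frobD_sqr_le M N : '[M + N] <= 2 * '[M] + 2 * '[N].
Proof. by have := frob_ge0 (M - N); rewrite frobB_sqr frobD_sqr; lra. Qed.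

Lemma frob_Cauchy_Schwarz M N : frob M N ^+ 2 <= '[M] * '[N].
Proof.
have [/frob_eq0 ->|M0] := eqVneq '[M] 0; first by rewrite !frob0l expr0n mul0r.
have Mpos : 0 < '[M] by rewrite lt0r M0 frob_ge0.
have := frob_ge0 (frob M N / '[M] *: M - N).
rewrite frobB_sqr frobZ_sqr frobZl => h.
rewrite -subr_ge0 (_ : _ - _ = '[M] * ((frob M N / '[M]) ^+ 2 * '[M]
  - 2 * (frob M N / '[M] * frob M N) + '[N])); first exact: mulr_ge0 (ltW Mpos) h.
by field.
Qed.

End Frobenius.

Section FrobeniusProduct.
Variables (R : realType) (m d n : nat) (A : 'M[R]_(m, d)).

Lemma frob_mulmx_adj (L : 'M[R]_(m, n)) (Z : 'M[R]_(d, n)) :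
  frob (A^T *m L) Z = frob L (A *m Z).
Proof.
have frob_tr p q (M N : 'M[R]_(p, q)) : frob M N = \tr (M^T *m N).
  rewrite /mxtrace /frob exchange_big; apply: eq_bigr => j _; rewrite mxE.
  by apply: eq_bigr => i _; rewrite mxE.
by rewrite !frob_tr trmx_mul trmxK mulmxA.
Qed.

Lemma frob_mulmx_le (Z : 'M[R]_(d, n)) : '[A *m Z] <= '[A] * '[Z].
Proof.
have rowsA : '[A] = \sum_i '[row i A].
  by apply: eq_bigr => i _; rewrite /frob big_ord1; apply: eq_bigr => k _; rewrite !mxE.
have colsZ : '[Z] = \sum_j '[(col j Z)^T].
  rewrite /frob exchange_big; apply: eq_bigr => j _; rewrite big_ord1.
  by apply: eq_bigr => k _; rewrite !mxE.
have entryAZ i j : (A *m Z) i j = frob (row i A) (col j Z)^T.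
  by rewrite mxE /frob big_ord1; apply: eq_bigr => k _; rewrite !mxE.
rewrite rowsA colsZ mulr_suml; apply: ler_sum => i _; rewrite mulr_sumr.
by apply: ler_sum => j _; rewrite -expr2 entryAZ frob_Cauchy_Schwarz.
Qed.

End FrobeniusProduct.

Lemma frob_col_mx (R : realType) p1 p2 q (M1 N1 : 'M[R]_(p1, q)) (M2 N2 : 'M[R]_(p2, q)) :
  frob (col_mx M1 M2) (col_mx N1 N2) = frob M1 N1 + frob M2 N2.
Proof.
rewrite /frob big_split_ord /=; congr (_ + _); apply: eq_bigr => i _;
  by apply: eq_bigr => j _; rewrite ?col_mxEu ?col_mxEd.
Qed.

Lemma mx_entry_le_norm (R : realType) p q (M : 'M[R]_(p, q)) i j : `|M i j| <= `|M|.
Proof.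
by rewrite [leRHS]/Num.Def.normr /= mx_normrE; apply/bigmax_geP; right; exists (i, j).
Qed.

Lemma mx_norm_le_sqrt_frob (R : realType) p q (M : 'M[R]_(p, q)) : `|M| <= Num.sqrt '[M].
Proof.
rewrite [`|_|]/Num.Def.normr /= mx_normrE; apply: bigmax_le => [|ij _]; first exact: sqrtr_ge0.
by rewrite -sqrtr_sqr ler_wsqrtr // sqr_entry_le_frob.
Qed.

Section ConvexFunctions.
Variables (R : realType) (p q : nat) (f : 'M[R]_(p, q) -> R).
Hypothesis convex_f : convex_fun f.

Lemma convex_average_le (I : Type) (r : seq I) (F : I -> 'M[R]_(p, q)) :
  (0 < size r)%N ->
  f ((size r)%:R^-1 *: \sum_(x <- r) F x) <= (size r)%:R^-1 * \sum_(x <- r) f (F x).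
Proof.
elim: r => [//|x [_ _|y r IH _]]; first by rewrite !big_seq1 invr1 scale1r mul1r.
have r_gt0 : (0 < size (y :: r))%N by [].
move: (y :: r) r_gt0 (IH isT) => {y IH}r r_gt0 IH.
have r0 : (size r)%:R != 0 :> R by rewrite pnatr_eq0 -lt0n.
set t : R := (size r).+1%:R^-1.
have t01 : 0 <= t <= 1 by rewrite invr_ge0 ler0n invf_le1 ?ler1n ?ltr0n.
have t1 : 1 - t = (size r)%:R * t by rewrite /t -natr1; field; rewrite natr1 pnatr_eq0.
have -> : t *: \sum_(j <- x :: r) F j =
    t *: F x + (1 - t) *: ((size r)%:R^-1 *: \sum_(j <- r) F j).
  by rewrite big_cons scalerDr t1 scalerA mulrAC mulfV // mul1r.
case/andP: t01 => t0 t1'; apply: le_trans (convex_f _ _ t0 t1') _.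
rewrite big_cons mulrDr lerD2l t1 -mulrA mulrCA ler_wpM2l //.
by apply: le_trans (ler_wpM2l (ler0n _ _) IH) _; rewrite mulrA mulfV // mul1r.
Qed.

Lemma convex_line_le (Z0 D : 'M[R]_(p, q)) (a : R) : `|a| <= 1 ->
  f (Z0 + a *: D) <= f Z0 + `|a| * (`|f (Z0 + D) - f Z0| + `|f (Z0 - D) - f Z0|).
Proof.
have chord b P : 0 <= b <= 1 -> f (Z0 + b *: (P - Z0)) <= f Z0 + b * `|f P - f Z0|.
  case/andP=> b0 b1; rewrite (_ : _ + _ = b *: P + (1 - b) *: Z0); last first.
    by rewrite scalerBr scalerBl scale1r addrCA addrC.
  apply: le_trans (convex_f _ _ b0 b1) _.
  by have := ler_wpM2l b0 (ler_norm (f P - f Z0)); lra.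
have [a0|a0] := leP 0 a; rewrite ?(ger0_norm a0) ?(ltr0_norm a0) => a1.
  have := chord a (Z0 + D); rewrite addrAC subrr add0r a0 a1 => /(_ isT).
  by move/le_trans; apply; rewrite lerD2l ler_wpM2l // lerDl.
have := chord (- a) (Z0 - D); rewrite addrAC subrr add0r scalerN scaleNr opprK.
rewrite oppr_ge0 (ltW a0) a1 => /(_ isT) /le_trans; apply.
by rewrite lerD2l ler_wpM2l ?lerDr // oppr_ge0 ltW.
Qed.

Local Notation coords := (index_enum {: 'I_p * 'I_q}).
Local Notation ncoords := (size coords).

Lemma mx_sum_delta_coords (h : 'M[R]_(p, q)) :
  h = \sum_(x <- coords) h x.1 x.2 *: delta_mx x.1 x.2.
Proof. by rewrite {1}(matrix_sum_delta h) pair_bigA. Qed.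

Lemma addmx_coords_average (Z0 h : 'M[R]_(p, q)) : (0 < ncoords)%N ->
  h + Z0 = ncoords%:R^-1 *:
    \sum_(x <- coords) (Z0 + (ncoords%:R * h x.1 x.2) *: delta_mx x.1 x.2).
Proof.
move=> N_gt0; rewrite big_split /= big_const_seq count_predT iter_addr_0.
rewrite -[Z0 *+ _]scaler_nat; under eq_bigr do rewrite -scalerA.
rewrite -scaler_sumr -scalerDr scalerA mulVf ?scale1r; last by rewrite pnatr_eq0 -lt0n.
by rewrite addrC -mx_sum_delta_coords.
Qed.

(* [Z0 + h] is the average of the points [Z0 + N h_x delta_x], which lie on the
   coordinate lines through [Z0]; [convex_line_le] bounds [f] on each of them. *)
Lemma convex_usc (Z0 : 'M[R]_(p, q)) (e : R) : 0 < e ->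
  \forall Z \near Z0, f Z <= f Z0 + e.
Proof.
move=> e0; set N := ncoords.
have [N0|N_gt0] := posnP N.
  apply/nbhs_normP; exists 1 => [|Z _]; first exact: ltr01.
  rewrite -(subrK Z0 Z) (mx_sum_delta_coords (Z - Z0)).
  by move/size0nil: N0 => ->; rewrite big_nil add0r lerDl ltW.
pose c (x : 'I_p * 'I_q) := `|f (Z0 + delta_mx x.1 x.2) - f Z0| +
                            `|f (Z0 - delta_mx x.1 x.2) - f Z0|.
set C := \sum_(x <- coords) c x.
have C_ge0 : 0 <= C by rewrite sumr_ge0 // => x _; rewrite addr_ge0.
have N_pos : (0 : R) < N%:R by rewrite ltr0n.
pose eta := Order.min N%:R^-1 (e / (C + 1)).
have eta0 : 0 < eta by rewrite lt_min invr_gt0 N_pos divr_gt0 // ltr_wpDl.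
have eta_C : eta * C <= e.
  apply: le_trans (_ : _ <= e / (C + 1) * C) _.
    by apply: ler_wpM2r => //; rewrite ge_min lexx orbT.
  by rewrite mulrAC ler_pdivrMr ?ltr_wpDl // ler_pM2l // lerDl.
apply/nbhs_normP; exists eta => // Z /ltW ZZ0.
rewrite -(subrK Z0 Z) addmx_coords_average //; set h := Z - Z0.
have h_le x : `|N%:R * h x.1 x.2| <= N%:R * eta.
  rewrite normrM ger0_norm ?ler0n // ler_wpM2l ?ler0n //.
  by apply: le_trans ZZ0; rewrite distrC mx_entry_le_norm.
apply: le_trans (convex_average_le _ N_gt0) _.
apply: le_trans (_ : _ <= N%:R^-1 * \sum_(x <- coords) (f Z0 + N%:R * eta * c x)) _.
  rewrite ler_pM2l ?invr_gt0 // ler_sum // => x _.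
  apply: le_trans (convex_line_le _ _ _) _.
    apply: le_trans (h_le x) _; have : eta <= N%:R^-1 by rewrite ge_min lexx.
    by move/(ler_wpM2l (ler0n _ N)); rewrite mulfV ?lt0r_neq0.
  by rewrite lerD2l; apply: ler_wpM2r; [rewrite addr_ge0 | exact: h_le].
rewrite big_split /= big_const_seq count_predT iter_addr_0 -/N -mulr_sumr -/C mulrDr.
rewrite -[f Z0 *+ N]mulr_natr mulrCA mulVf ?lt0r_neq0 // mulr1 lerD2l.
by rewrite !mulrA mulVf ?lt0r_neq0 // mul1r.
Qed.

(* [Z0] is the midpoint of [Z] and [2 Z0 - Z]. *)
Lemma convex_lsc (Z0 : 'M[R]_(p, q)) (e : R) : 0 < e ->
  \forall Z \near Z0, f Z0 <= f Z + e.
Proof.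
move=> e0; have /nbhs_normP [eta eta0 usc] := convex_usc Z0 e0.
apply/nbhs_normP; exists eta => // Z ZZ0.
have h0 : (0 : R) <= 2^-1 by rewrite invr_ge0.
have h1 : (2 : R)^-1 <= 1 by rewrite invf_le1 // ler1n.
have := convex_f Z (Z0 + (Z0 - Z)) h0 h1.
have -> : 2^-1 *: Z + (1 - 2^-1) *: (Z0 + (Z0 - Z)) = Z0.
  by apply/matrixP => i j; rewrite !mxE; field.
have : ball_ Num.norm Z0 eta (Z0 + (Z0 - Z)).
  by rewrite /ball_ /= opprD addNKr normrN; exact: ZZ0.
move=> /usc; lra.
Qed.

(* Compare [Z'] with the point [s Y + (1 - s) Z'] and let [s] tend to [0]. *)
Lemma prox_subgrad (a : R) (C Z' : 'M[R]_(p, q)) : 0 <= a ->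
  (forall Y, f Z' + a / 2 * '[Z' - C] <= f Y + a / 2 * '[Y - C]) ->
  subgrad f Z' (a *: (C - Z')).
Proof.
move=> a0 Z'min Y; set D := Y - Z'.
rewrite frobZl -subr_ge0; set x := (X in 0 <= X).
set w := a / 2 * '[D]; have w0 : 0 <= w by rewrite mulr_ge0 ?frob_ge0 ?divr_ge0.
apply/ler_addgt0Pr => eps eps0.
set s := Order.min 1 (eps / (w + 1)).
have s0 : 0 < s by rewrite lt_min ltr01 divr_gt0 // ltr_wpDl.
have s1 : s <= 1 by rewrite ge_min lexx.
have sw : s * w <= eps.
  apply: le_trans (_ : _ <= eps / (w + 1) * (w + 1)) _.
    by apply: ler_pM => //; [exact: ltW | rewrite ge_min lexx orbT | rewrite lerDl].
  by rewrite divfK ?lt0r_neq0 ?ltr_wpDl.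
have seg := convex_f Y Z' (ltW s0) s1.
have := Z'min (s *: Y + (1 - s) *: Z').
have -> : s *: Y + (1 - s) *: Z' - C = (Z' - C) + s *: D.
  by apply/matrixP => i j; rewrite !mxE; ring.
move: seg; set fs := f _ => seg.
rewrite (frobD_sqr (Z' - C)) frobZr frobZ_sqr.
have uv : frob (Z' - C) D = - frob (C - Z') D by rewrite -frobNl opprB.
rewrite uv => opt.
have : 0 <= s * (x + s * w) by rewrite /x /w; nra.
by rewrite pmulr_rge0 //; lra.
Qed.

Lemma subgrad_mono (Z1 Z2 G1 G2 : 'M[R]_(p, q)) :
  subgrad f Z1 G1 -> subgrad f Z2 G2 -> 0 <= frob (G1 - G2) (Z1 - Z2).
Proof.
move=> /(_ Z2) h1 /(_ Z1) h2; move: h1.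
by rewrite -(opprB Z1 Z2) frobNr frobBl; lra.
Qed.

End ConvexFunctions.

Section MatrixLimits.
Context {R : realType} {T : Type} {F : set_system T} {FF : Filter F}.

Lemma cvg_mx_entry p q (u : T -> 'M[R]_(p, q)) (L : 'M[R]_(p, q)) i j :
  u @ F --> L -> u x i j @[x --> F] --> L i j.
Proof.
by move=> uL; apply: (cvg_comp u (fun M : 'M[R]_(p, q) => M i j) uL); exact: coord_continuous.
Qed.

Lemma cvg_mx_entrywise p q (u : T -> 'M[R]_(p, q)) (L : 'M[R]_(p, q)) :
  (forall i j, u x i j @[x --> F] --> L i j) -> u @ F --> L.
Proof.
move=> uL; apply/cvgrPdist_lt => e e0.
have : \forall x \near F, forall ij : 'I_p * 'I_q, `|L ij.1 ij.2 - u x ij.1 ij.2| < e.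
  by apply: filter_forall => ij; move/cvgrPdist_lt: (uL ij.1 ij.2); apply.
apply: filterS => x near_x; rewrite [`|_|]/Num.Def.normr /= mx_normrE.
by apply: bigmax_lt => // ij _; rewrite !mxE; exact: near_x.
Qed.

Lemma cvg_frob p q (u v : T -> 'M[R]_(p, q)) (U V : 'M[R]_(p, q)) :
  u @ F --> U -> v @ F --> V -> frob (u x) (v x) @[x --> F] --> frob U V.
Proof.
move=> uU vV; apply: cvg_big => [|i _]; first exact: add_continuous.
apply: cvg_big => [|j _]; first exact: add_continuous.
by apply: cvgM; apply: cvg_mx_entry.
Qed.

Lemma cvg_mulmx m d n (A : 'M[R]_(m, d)) (u : T -> 'M[R]_(d, n)) (U : 'M[R]_(d, n)) :
  u @ F --> U -> A *m u x @[x --> F] --> A *m U.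
Proof.
move=> uU; apply: cvg_mx_entrywise => i j; rewrite mxE.
under eq_cvg do rewrite mxE.
apply: cvg_big => [|k _]; first exact: add_continuous.
by apply: cvgMr; apply: cvg_mx_entry.
Qed.

Lemma cvg_usubmx p1 p2 q (u : T -> 'M[R]_(p1 + p2, q)) (U : 'M[R]_(p1 + p2, q)) :
  u @ F --> U -> usubmx (u x) @[x --> F] --> usubmx U.
Proof.
move=> uU; apply: cvg_mx_entrywise => i j; rewrite mxE.
by under eq_cvg do rewrite mxE; exact: cvg_mx_entry.
Qed.

Lemma cvg_dsubmx p1 p2 q (u : T -> 'M[R]_(p1 + p2, q)) (U : 'M[R]_(p1 + p2, q)) :
  u @ F --> U -> dsubmx (u x) @[x --> F] --> dsubmx U.
Proof.
move=> uU; apply: cvg_mx_entrywise => i j; rewrite mxE.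
by under eq_cvg do rewrite mxE; exact: cvg_mx_entry.
Qed.

Lemma cvg_frob_dist0 p q (u : T -> 'M[R]_(p, q)) (L : 'M[R]_(p, q)) :
  '[u x - L] @[x --> F] --> 0 -> u @ F --> L.
Proof.
move=> /cvgrPdist_lt frob0; apply/cvgrPdist_lt => e e0.
apply: filterS (frob0 _ (exprn_gt0 2 e0)) => x.
rewrite sub0r normrN ger0_norm ?frob_ge0 // -ltr_sqrt ?exprn_gt0 // sqrtr_sqr gtr0_norm //.
by apply: le_lt_trans; rewrite distrC mx_norm_le_sqrt_frob.
Qed.

Lemma frob_le_cvg p q (u : T -> 'M[R]_(p, q)) (L : 'M[R]_(p, q)) (s : T -> R) :
  (forall x, '[u x - L] <= s x) -> s @ F --> 0 -> u @ F --> L.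
Proof.
move=> us s0; apply: cvg_frob_dist0; apply: (@squeeze_cvgr _ _ _ _ (cst 0) s) => //.
  by near=> x; rewrite frob_ge0 us.
exact: cvg_cst.
Unshelve. all: by end_near.
Qed.

End MatrixLimits.

(* Heine-Borel: the set of matrices with entries in [-sqrt B, sqrt B] is the
   image under [vec_mx] of a product of segments. *)
Lemma frob_bounded_cluster (R : realType) p q (u : nat -> 'M[R]_(p, q)) (B : R) :
  (forall k, '[u k] <= B) -> exists L, cluster (u @ \oo) L.
Proof.
move=> uB; set K := [set M : 'M[R]_(p, q) | forall i j, `|M i j| <= Num.sqrt B].
have vec_mxE (v : 'rV[R]_(p * q)) i j : vec_mx v i j = v 0 (mxvec_index i j).
  by rewrite -[in RHS](vec_mxK v) mxvecE.
have K_compact : compact K.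
  have -> : K = @vec_mx R p q @` [set v : 'rV[R]_(p * q) |
      forall k, `[- Num.sqrt B, Num.sqrt B]%classic (v ord0 k)].
    apply/seteqP; split => [M MB|_ [v vB <-] i j].
      exists (mxvec M); last exact: mxvecK.
      by move=> k; case/mxvec_indexP: k => i j; rewrite mxvecE /= in_itv /= -ler_norml.
    by have := vB (mxvec_index i j); rewrite vec_mxE /= in_itv /= -ler_norml.
  apply: continuous_compact.
    apply: continuous_subspaceT => v; apply: (@cvg_mx_entrywise _ _ (nbhs v)) => i j.
    under eq_cvg do rewrite vec_mxE; rewrite vec_mxE; exact: cvg_mx_entry.
  exact: (rV_compact (fun _ => @segment_compact R (- Num.sqrt B) (Num.sqrt B))).
have [|L [_ clL]] := K_compact (u @ \oo) _; last by exists L.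
exists 0%N => // k _ i j; apply: le_trans (mx_entry_le_norm _ i j) _.
by apply: le_trans (mx_norm_le_sqrt_frob _) _; rewrite ler_wsqrtr.
Qed.

Lemma cluster_subseq (R : realType) (V : pseudoMetricType R) (u : nat -> V) (L : V) :
  cluster (u @ \oo) L ->
  exists phi : nat -> nat, (forall j, (j <= phi j)%N) /\ u \o phi @ \oo --> L.
Proof.
move=> clL.
have /choice [phi phiP] : forall j, exists k, (j <= k)%N /\ ball L j.+1%:R^-1 (u k).
  move=> j; have [_ [[k jk <-] Lk]] :
      (u @` [set k | (j <= k)%N] `&` ball L j.+1%:R^-1) !=set0.
    apply: clL; last exact: nbhsx_ballx.
    by exists j => // k /= jk; exists k.
  by exists k.
exists phi; split => [j|]; first by case: (phiP j).
apply/cvg_ballP => e e0; near=> j; apply: le_ball (phiP j).2; apply: ltW.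
by near: j; exact: (near_infty_natSinv_lt (PosNum e0)).
Unshelve. all: by end_near.
Qed.

Lemma cvg_subseq (T : topologicalType) (u : nat -> T) (L : T) (phi : nat -> nat) :
  (forall j, (j <= phi j)%N) -> u @ \oo --> L -> u \o phi @ \oo --> L.
Proof.
move=> phi_ge uL; apply: cvg_comp uL; apply/cvgnyPge => N.
by near=> j; apply: leq_trans (phi_ge j); near: j; exact: nbhs_infty_ge.
Unshelve. all: by end_near.
Qed.

Lemma nonincreasing_subseq_cvg (R : realType) (u : R^nat) (phi : nat -> nat) (l : R) :
  nonincreasing_seq u -> (forall j, (j <= phi j)%N) ->
  u \o phi @ \oo --> l -> u @ \oo --> l.
Proof.
move=> u_noninc phi_ge /cvgrPdist_lt ul; apply/cvgrPdist_lt => e e0.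
have [N _ uNl] := ul e e0; exists (phi N) => // k /= Nk.
have := uNl (maxn N k) (leq_maxl _ _); have := uNl N (leqnn N).
have := u_noninc _ _ Nk; have := u_noninc _ _ (leq_trans (leq_maxr N k) (phi_ge _)).
by rewrite /= !ltr_distlC; lra.
Qed.

Lemma subgrad_closed (R : realType) p q (f : 'M[R]_(p, q) -> R)
    (T : Type) (F : set_system T) {FF : ProperFilter F}
    (u v : T -> 'M[R]_(p, q)) (Zb Gb : 'M[R]_(p, q)) :
  convex_fun f -> (forall x, subgrad f (u x) (v x)) ->
  u @ F --> Zb -> v @ F --> Gb -> subgrad f Zb Gb.
Proof.
move=> convex_f sub_uv uZ vG Y; apply/ler_addgt0Pr => e e0.
have e2 : 0 < e / 2 by rewrite divr_gt0.
have lin : frob (v x) (Y - u x) @[x --> F] --> frob Gb (Y - Zb).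
  by apply: cvg_frob vG _; apply: cvgB uZ; exact: cvg_cst.
near F => x.
have lsc : f Zb <= f (u x) + e / 2.
  by near: x; exact: uZ _ (convex_lsc convex_f Zb e2).
have lin_x : frob Gb (Y - Zb) <= frob (v x) (Y - u x) + e / 2.
  near: x; move/cvgrPdist_le: lin => /(_ _ e2); apply: filterS => x.
  by rewrite ler_distl => /andP[].
by have := sub_uv x Y; lra.
Unshelve. all: by end_near.
Qed.

Section ConstantParameters.
Variables (R : realType) (p q : nat).

Lemma hadm_cst (a : R) (M : 'M[R]_(p, q)) : hadm (const_mx a) M = a *: M.
Proof. by apply/matrixP => i j; rewrite !mxE. Qed.

Lemma einv_cst (a : R) : einv (const_mx a : 'M[R]_(p, q)) = const_mx a^-1.
Proof. by apply/matrixP => i j; rewrite !mxE. Qed.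

Lemma wsq_cst (a : R) (M : 'M[R]_(p, q)) : wsq (const_mx a) M = a / 2 * '[M].
Proof.
rewrite /wsq /frob !mulr_sumr; apply: eq_bigr => i _.
by rewrite !mulr_sumr; apply: eq_bigr => j _; rewrite !mxE; ring.
Qed.

End ConstantParameters.

Section LinearizedADMM.
Variables (R : realType) (m d n : nat) (A : 'M[R]_(m, d)) (X : 'M[R]_(m, n)).
Variables (f : 'M[R]_(d, n) -> R) (g : 'M[R]_(m, n) -> R).
Hypotheses (convex_f : convex_fun f) (convex_g : convex_fun g).

Lemma in_S_linearized (sigma t : R) : 0 <= sigma -> '[A] < t ->
  in_S sigma A A (const_mx t : 'M[R]_(d, n)) (const_mx 1).
Proof.
move=> sigma0 At; have t0 : 0 < t by apply: le_lt_trans At; exact: frob_ge0.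
split=> [x|i j|i j|Z Z0]; rewrite ?mxE ?ltr01 //.
- rewrite subrr mul0mx /vnorm2 big1 ?sqrtr0 => [|i _]; last by rewrite mxE expr0n.
  by rewrite mulr_ge0 ?sqrtr_ge0.
- rewrite !hadm_cst scale1r frobBl frobZl frob_mulmx_adj subr_gt0.
  apply: le_lt_trans (frob_mulmx_le A Z) _.
  by rewrite ltr_pM2r ?frob_gt0.
Qed.

Lemma linearized_step_subgrad (t : R) Z E l Z' E' l' : 0 < t ->
  dladmm_step f g A X A (const_mx t) (const_mx 1) Z E l Z' E' l' ->
  [/\ subgrad f Z' (t *: (Z - Z') - A^T *m (l + (A *m Z + E - X))),
      subgrad g E' (- l') & l' = l + (A *m Z' + E' - X)].
Proof.
move=> t0 [Zmin Emin ->].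
rewrite !hadm_cst !einv_cst !hadm_cst !scale1r invr1 scale1r in Zmin Emin *.
split => //.
- set P := A^T *m _; set C := Z - t^-1 *: P.
  have -> : t *: (Z - Z') - P = t *: (C - Z').
    by apply/matrixP => i j; rewrite !mxE; field; rewrite gt_eqF.
  apply: prox_subgrad (ltW t0) _ => // Y; move: (Zmin Y); rewrite !wsq_cst.
  suff shift V : V - Z + t^-1 *: P = V - C by rewrite !shift.
  by rewrite /C; apply/matrixP => i j; rewrite !mxE; ring.
- set C := X - A *m Z' - l.
  have -> : - (l + (A *m Z' + E' - X)) = 1 *: (C - E').
    by rewrite scale1r /C; apply/matrixP => i j; rewrite !mxE; ring.
  apply: prox_subgrad ler01 _ => // Y; move: (Emin Y); rewrite !wsq_cst.
  suff shift V : V - X + A *m Z' + l = V - C by rewrite !shift.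
  by rewrite /C; apply/matrixP => i j; rewrite !mxE; ring.
Qed.

End LinearizedADMM.

Section WeightedNorm.
Variables (R : realType) (m d n : nat) (A : 'M[R]_(m, d)) (t : R).

(* The squared norm of [(z, e, l)] for the metric [H = diag(t - A^T A, 1, 1)]
   of the linearized ADMM. *)
Definition Hnorm2 (z : 'M[R]_(d, n)) (e l : 'M[R]_(m, n)) : R :=
  t * '[z] - '[A *m z] + '[e] + '[l].

Lemma Hnorm2_ge (z : 'M[R]_(d, n)) (e l : 'M[R]_(m, n)) : 1 + '[A] <= t ->
  '[z] + '[e] + '[l] <= Hnorm2 z e l.
Proof. by move=> At; have := frob_mulmx_le A z; have := frob_ge0 z; rewrite /Hnorm2; nra. Qed.

Lemma Hnorm2_ge0 (z : 'M[R]_(d, n)) (e l : 'M[R]_(m, n)) : 1 + '[A] <= t ->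
  0 <= Hnorm2 z e l.
Proof. by move/(Hnorm2_ge z e l); apply: le_trans; rewrite !addr_ge0 ?frob_ge0. Qed.

(* [z, e, l] are the offsets of the new iterate from a solution and
   [dz, de, dl] those from the previous iterate; the hypotheses are the
   multiplier update and the monotonicity of the subdifferentials. *)
Lemma Hnorm2_descent (z dz : 'M[R]_(d, n)) (e de l dl : 'M[R]_(m, n)) :
  dl = A *m z + e ->
  0 <= frob (- (t *: dz) - A^T *m (l - A *m dz - de)) z ->
  0 <= frob (- l) e -> 0 <= frob (- dl) de ->
  Hnorm2 z e l + Hnorm2 dz de dl <= Hnorm2 (z - dz) (e - de) (l - dl).
Proof.
move=> -> mono_f mono_g mono_g'.
rewrite frobBl frobNl frobZl frob_mulmx_adj !frobBl in mono_f.
rewrite frobNl in mono_g; rewrite frobNl frobDl in mono_g'.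
rewrite /Hnorm2 mulmxBr !frobB_sqr frobD_sqr frobDr.
move: mono_f mono_g mono_g'; set Az := A *m z; set Adz := A *m dz.
rewrite ?[frob dz z]frobC ?[frob Adz Az]frobC ?[frob e Az]frobC ?[frob de Az]frobC
  ?[frob l Az]frobC ?[frob e l]frobC ?[frob de e]frobC ?[frob de l]frobC.
nra.
Qed.

Lemma Hnorm2_0 : Hnorm2 (0 : 'M[R]_(d, n)) 0 0 = 0.
Proof. by rewrite /Hnorm2 mulmx0 !frob0l mulr0 subr0 !addr0. Qed.

Lemma cvg_Hnorm2 (T : Type) (F : set_system T) {FF : Filter F}
    (z : T -> 'M[R]_(d, n)) (e l : T -> 'M[R]_(m, n)) z0 e0 l0 :
  z @ F --> z0 -> e @ F --> e0 -> l @ F --> l0 ->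
  Hnorm2 (z x) (e x) (l x) @[x --> F] --> Hnorm2 z0 e0 l0.
Proof.
move=> zz0 ee0 ll0; apply: cvgD; last exact: cvg_frob.
apply: cvgD; last exact: cvg_frob.
apply: cvgB; first by apply: cvgMr; exact: cvg_frob.
by apply: cvg_frob; exact: cvg_mulmx.
Qed.

End WeightedNorm.

Lemma in_OmegaP (R : realType) m d n (f : 'M[R]_(d, n) -> R) (g : 'M[R]_(m, n) -> R)
    (A : 'M[R]_(m, d)) (X : 'M[R]_(m, n)) Zs Es ls :
  in_Omega f g A X Zs Es ls <->
  [/\ subgrad f Zs (- (A^T *m ls)), subgrad g Es (- ls) & A *m Zs + Es = X].
Proof.
split=> [[[G [fG GE]] [H [gH HE]] feas]|[fG gH feas]].
  move/eqP: GE; move/eqP: HE; rewrite !addr_eq0 => /eqP HE /eqP GE.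
  by rewrite -GE -HE.
by split=> //; [exists (- (A^T *m ls)) | exists (- ls)]; rewrite addNr.
Qed.

Section LinearizedADMMConvergence.
Variables (R : realType) (m d n : nat) (A : 'M[R]_(m, d)) (X : 'M[R]_(m, n)).
Variables (f : 'M[R]_(d, n) -> R) (g : 'M[R]_(m, n) -> R).
Hypotheses (convex_f : convex_fun f) (convex_g : convex_fun g).

Local Notation t := (1 + '[A]).

Variables (Z : nat -> 'M[R]_(d, n)) (E l : nat -> 'M[R]_(m, n)).
Hypothesis Z_subgrad : forall k,
  subgrad f (Z k.+1) (t *: (Z k - Z k.+1) - A^T *m (l k + (A *m Z k + E k - X))).
(* For the D-LADMM iterates this holds only from [k = 1] on, so [theorem1]
   applies this section to the iterates shifted by one. *)
Hypothesis E_subgrad : forall k, subgrad g (E k) (- l k).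
Hypothesis l_update : forall k, l k.+1 = l k + (A *m Z k.+1 + E k.+1 - X).

Local Notation dist Zs Es ls k := (Hnorm2 A t (Z k - Zs) (E k - Es) (l k - ls)).
Local Notation step k := (Hnorm2 A t (Z k.+1 - Z k) (E k.+1 - E k) (l k.+1 - l k)).

Lemma dist_descent Zs Es ls : in_Omega f g A X Zs Es ls ->
  forall k, dist Zs Es ls k.+1 + step k <= dist Zs Es ls k.
Proof.
case/in_OmegaP => fs gs feas k.
have sub_sub p q (U V W : 'M[R]_(p, q)) : U - W - (U - V) = V - W.
  by apply/matrixP => i j; rewrite !mxE; ring.
have := @Hnorm2_descent R m d n A t (Z k.+1 - Zs) (Z k.+1 - Z k) (E k.+1 - Es) (E k.+1 - E k)
  (l k.+1 - ls) (l k.+1 - l k); rewrite !sub_sub; apply.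
- rewrite l_update -feas mulmxBr; move: (A *m _) (A *m Zs) => P Q.
  by apply/matrixP => i j; rewrite !mxE; ring.
- have := subgrad_mono (Z_subgrad k) fs; congr (0 <= frob _ _).
  have -> : l k.+1 - ls - A *m (Z k.+1 - Z k) - (E k.+1 - E k) =
      l k + (A *m Z k + E k - X) - ls.
    rewrite l_update mulmxBr; move: (A *m Z k.+1) (A *m Z k) => P Q.
    by apply/matrixP => i j; rewrite !mxE; ring.
  rewrite mulmxBr; move: (A^T *m _) (A^T *m ls) => P Q.
  by apply/matrixP => i j; rewrite !mxE; ring.
- have := subgrad_mono (E_subgrad k.+1) gs; congr (0 <= frob _ _).
  by rewrite opprD.
- have := subgrad_mono (E_subgrad k.+1) (E_subgrad k); congr (0 <= frob _ _).
  by rewrite opprD.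
Qed.

Lemma dist_nonincreasing Zs Es ls : in_Omega f g A X Zs Es ls ->
  nonincreasing_seq (fun k => dist Zs Es ls k).
Proof.
move=> sol; apply/nonincreasing_seqP => k; have := dist_descent sol k.
by have := Hnorm2_ge0 (Z k.+1 - Z k) (E k.+1 - E k) (l k.+1 - l k) (lexx t); lra.
Qed.

Section WithSolution.
Variables (Zs : 'M[R]_(d, n)) (Es ls : 'M[R]_(m, n)).
Hypothesis sol : in_Omega f g A X Zs Es ls.

Lemma step_cvg0 : step k @[k --> \oo] --> 0.
Proof.
have V0 k : 0 <= dist Zs Es ls k by apply: Hnorm2_ge0.
have /cvg_ex [v Vv] : cvgn (fun k => dist Zs Es ls k).
  apply: nonincreasing_is_cvgn (dist_nonincreasing sol) _.
  by exists 0 => _ [k _ <-]; exact: V0.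
apply: (@squeeze_cvgr _ _ _ _ (cst 0) (fun k => dist Zs Es ls k - dist Zs Es ls k.+1)).
- near=> k; rewrite Hnorm2_ge0 //=; have := dist_descent sol k; lra.
- exact: cvg_cst.
- rewrite -(subrr v); apply: cvgB; first exact: Vv.
  by move: Vv; rewrite -cvg_shiftS.
Unshelve. all: by end_near.
Qed.

Lemma increments_cvg0 :
  [/\ Z k.+1 - Z k @[k --> \oo] --> (0 : 'M[R]_(d, n)),
      E k.+1 - E k @[k --> \oo] --> (0 : 'M[R]_(m, n))
    & l k.+1 - l k @[k --> \oo] --> (0 : 'M[R]_(m, n))].
Proof.
split; apply: frob_le_cvg step_cvg0 => k; rewrite subr0;
  apply: le_trans (Hnorm2_ge _ _ _ (lexx t));
  have := frob_ge0 (Z k.+1 - Z k); have := frob_ge0 (E k.+1 - E k);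
  have := frob_ge0 (l k.+1 - l k); lra.
Qed.

Lemma iterates_bounded : exists B, forall k, '[col_mx (Z k) (col_mx (E k) (l k))] <= B.
Proof.
exists (2 * dist Zs Es ls 0 + 2 * ('[Zs] + '[Es] + '[ls])) => k.
rewrite !frob_col_mx.
have decomp p q (U V : 'M[R]_(p, q)) : '[U] <= 2 * '[U - V] + 2 * '[V].
  by rewrite -{1 2}(subrK V U); exact: frobD_sqr_le.
have := decomp _ _ (Z k) Zs; have := decomp _ _ (E k) Es; have := decomp _ _ (l k) ls.
have := Hnorm2_ge (Z k - Zs) (E k - Es) (l k - ls) (lexx t).
have := dist_nonincreasing sol (leq0n k).
lra.
Qed.

Lemma iterates_cluster : exists phi (Zb : 'M[R]_(d, n)) (Eb Lb : 'M[R]_(m, n)),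
  (forall j, (j <= phi j)%N) /\
  [/\ Z \o phi @ \oo --> Zb, E \o phi @ \oo --> Eb & l \o phi @ \oo --> Lb].
Proof.
have [B bounded] := iterates_bounded.
have [W /cluster_subseq [phi [phi_ge wW]]] := frob_bounded_cluster bounded.
exists phi, (usubmx W), (usubmx (dsubmx W)), (dsubmx (dsubmx W)); split => //.
split.
- by move/cvg_usubmx: wW; under eq_cvg do rewrite /= col_mxKu.
- by move/cvg_dsubmx/cvg_usubmx: wW; under eq_cvg do rewrite /= col_mxKd col_mxKu.
- by move/cvg_dsubmx/cvg_dsubmx: wW; under eq_cvg do rewrite /= !col_mxKd.
Qed.

Lemma cluster_in_Omega (phi : nat -> nat) (Zb : 'M[R]_(d, n)) (Eb Lb : 'M[R]_(m, n)) :
  (forall j, (j <= phi j)%N) ->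
  Z \o phi @ \oo --> Zb -> E \o phi @ \oo --> Eb -> l \o phi @ \oo --> Lb ->
  in_Omega f g A X Zb Eb Lb.
Proof.
move=> phi_ge Zb_lim Eb_lim Lb_lim; have [dZ dE dl] := increments_cvg0.
have next_lim p q (u : nat -> 'M[R]_(p, q)) (U : 'M[R]_(p, q)) :
    u \o phi @ \oo --> U -> u k.+1 - u k @[k --> \oo] --> (0 : 'M[R]_(p, q)) ->
    u (phi j).+1 @[j --> \oo] --> U.
  by move=> uU /(cvg_subseq phi_ge) du; apply: cvg_sub0 du uU.
have Z1_lim := next_lim _ _ _ _ Zb_lim dZ.
have E1_lim := next_lim _ _ _ _ Eb_lim dE.
have res_lim : A *m Z (phi j) + E (phi j) - X @[j --> \oo] --> A *m Zb + Eb - X.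
  by apply: cvgB; [apply: cvgD; [exact: cvg_mulmx | exact: Eb_lim] | exact: cvg_cst].
have res_next_lim :
    A *m Z (phi j).+1 + E (phi j).+1 - X @[j --> \oo] --> A *m Zb + Eb - X.
  by apply: cvgB; [apply: cvgD; [exact: cvg_mulmx | exact: E1_lim] | exact: cvg_cst].
have feas : A *m Zb + Eb = X.
  apply/eqP; rewrite -subr_eq0; apply/eqP; apply: (norm_cvg_unique res_next_lim).
  have res_eq k : A *m Z k.+1 + E k.+1 - X = l k.+1 - l k.
    by rewrite l_update [RHS]addrC addKr.
  rewrite /=; under eq_cvg do rewrite res_eq.
  exact: cvg_subseq phi_ge dl.
apply/in_OmegaP; split => //.
- apply: (subgrad_closed convex_f (fun j => Z_subgrad (phi j)) Z1_lim).
  have -> : - (A^T *m Lb) = t *: (Zb - Zb) - A^T *m (Lb + (A *m Zb + Eb - X)).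
    by rewrite feas !subrr scaler0 addr0 sub0r.
  apply: cvgB; first by apply: cvgZr; apply: cvgB Zb_lim Z1_lim.
  by apply: cvg_mulmx; apply: cvgD Lb_lim res_lim.
- by apply: (subgrad_closed convex_g (fun j => E_subgrad (phi j)) Eb_lim); exact: cvgN.
Qed.

End WithSolution.

Lemma linearized_admm_cvg : (exists Zs Es ls, in_Omega f g A X Zs Es ls) ->
  exists Zb Eb Lb, in_Omega f g A X Zb Eb Lb /\
    [/\ Z @ \oo --> Zb, E @ \oo --> Eb & l @ \oo --> Lb].
Proof.
move=> [Zs [Es [ls sol]]].
have [phi [Zb [Eb [Lb [phi_ge [Zb_lim Eb_lim Lb_lim]]]]]] := iterates_cluster sol.
have solb := cluster_in_Omega sol phi_ge Zb_lim Eb_lim Lb_lim.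
have dist_cvg0 : dist Zb Eb Lb k @[k --> \oo] --> 0.
  apply: (nonincreasing_subseq_cvg (dist_nonincreasing solb) phi_ge).
  rewrite -(Hnorm2_0 n A t); apply: cvg_Hnorm2.
  - by rewrite -(subrr Zb); apply: cvgB Zb_lim _; exact: cvg_cst.
  - by rewrite -(subrr Eb); apply: cvgB Eb_lim _; exact: cvg_cst.
  - by rewrite -(subrr Lb); apply: cvgB Lb_lim _; exact: cvg_cst.
exists Zb, Eb, Lb; split => //; split; apply: frob_le_cvg dist_cvg0 => k;
  apply: le_trans (Hnorm2_ge _ _ _ (lexx t));
  have := frob_ge0 (Z k - Zb); have := frob_ge0 (E k - Eb);
  have := frob_ge0 (l k - Lb); lra.
Qed.

End LinearizedADMMConvergence.

Unset Implicit Arguments.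
Set Strict Implicit.

Theorem theorem1 (R : realType) (m d n : nat) (A : 'M[R]_(m, d)) (X : 'M[R]_(m, n))
  (f : 'M[R]_(d, n) -> R) (g : 'M[R]_(m, n) -> R) (c : R) :
  convex_fun f -> convex_fun g ->
  (forall s : R, 0 <= s -> s <= c -> exists (W : 'M[R]_(m, d)) (th : 'M[R]_(d, n)) (be : 'M[R]_(m, n)), in_S s A W th be) ->
  (exists Zs Es ls, in_Omega f g A X Zs Es ls) ->
  forall sigma : R, 0 <= sigma -> sigma <= c ->
  forall (Z0 : 'M[R]_(d, n)) (E0 : 'M[R]_(m, n)) (l0 : 'M[R]_(m, n)),
  exists (W : nat -> 'M[R]_(m, d)) (th : nat -> 'M[R]_(d, n)) (be : nat -> 'M[R]_(m, n)),
    (forall k, in_S sigma A (W k) (th k) (be k)) /\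
    forall (Z : nat -> 'M[R]_(d, n)) (E : nat -> 'M[R]_(m, n)) (l : nat -> 'M[R]_(m, n)),
      Z 0%N = Z0 -> E 0%N = E0 -> l 0%N = l0 ->
      (forall k, dladmm_step f g A X (W k) (th k) (be k)
                   (Z k) (E k) (l k) (Z k.+1) (E k.+1) (l k.+1)) ->
      exists Zs Es ls, in_Omega f g A X Zs Es ls /\
        [/\ Z @ \oo --> Zs, E @ \oo --> Es & l @ \oo --> ls].
Proof.
move=> convex_f convex_g _ sol sigma sigma0 _ Z0 E0 l0.
have t_pos : 0 < 1 + '[A] by rewrite ltr_pwDl ?frob_ge0.
exists (fun=> A), (fun=> const_mx (1 + '[A])), (fun=> const_mx 1); split.
  by move=> k; apply: in_S_linearized; rewrite // ltrDr.
move=> Z E l _ _ _ steps.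
have step k := linearized_step_subgrad convex_f convex_g t_pos (steps k).
suff [Zb [Eb [Lb [solb [Zb_lim Eb_lim Lb_lim]]]]] :
    exists Zb Eb Lb, in_Omega f g A X Zb Eb Lb /\ [/\ Z k.+1 @[k --> \oo] --> Zb,
      E k.+1 @[k --> \oo] --> Eb & l k.+1 @[k --> \oo] --> Lb].
  by exists Zb, Eb, Lb; move: Zb_lim Eb_lim Lb_lim; rewrite !cvg_shiftS.
apply: (linearized_admm_cvg convex_f convex_g _ _ _ sol) => k;
  by [case: (step k.+1) | case: (step k) | case: (step k.+1)].
Qed.
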